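(* For every integer $n \ge 2$ there exists a Sarvate--Beam cube of order $n$, that is, a function $C:[n]^3 \to \mathbb{Z}_{\ge 0}$ (with $[n]=\{1,\dots,n\}$) whose $3n^2$ line sums $$\sum_{i=1}^n C(i,j,k)\ \ (j,k\in[n]),\qquad \sum_{j=1}^n C(i,j,k)\ \ (i,k\in[n]),\qquad \sum_{k=1}^n C(i,j,k)\ \ (i,j\in[n])$$ are, as a multiset, exactly the integers $0,1,2,\dots,3n^2-1$ (each occurring once).
   Context: A line of an $n\times n\times n$ cube is a set of $n$ positions obtained by fixing two of the three coordinates and letting the third range over $[n]$; a line sum is the sum of the entries over a line. There are $3n^2$ lines. *)

From mathcomp Require Import all_boot.
Set Implicit Arguments. Unset Strict Implicit. Unset Printing Implicit Defensive.

Definition line_sums1 n (C : 'I_n -> 'I_n -> 'I_n -> nat) : seq nat :=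
  [seq \sum_(i < n) C i jk.1 jk.2 | jk <- enum ({: 'I_n * 'I_n})].
Definition line_sums2 n (C : 'I_n -> 'I_n -> 'I_n -> nat) : seq nat :=
  [seq \sum_(j < n) C ik.1 j ik.2 | ik <- enum ({: 'I_n * 'I_n})].
Definition line_sums3 n (C : 'I_n -> 'I_n -> 'I_n -> nat) : seq nat :=
  [seq \sum_(k < n) C ij.1 ij.2 k | ij <- enum ({: 'I_n * 'I_n})].

Definition line_sums n (C : 'I_n -> 'I_n -> 'I_n -> nat) : seq nat :=
  line_sums1 C ++ line_sums2 C ++ line_sums3 C.

Definition sarvate_beam_cube n (C : 'I_n -> 'I_n -> 'I_n -> nat) : Prop :=
  perm_eq (line_sums C) (iota 0 (3 * n ^ 2)).

From mathcomp Require Import all_boot zify.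

Set Implicit Arguments.
Unset Strict Implicit.
Unset Printing Implicit Defensive.

(* Put P(i,j) on the layer i + j + k = 0 and Q(i,j) on the layer i + j + k = 1
   (mod n), and 0 elsewhere.  Every line meets each layer exactly once, so the
   line sums are the n^2 triples P x + Q x, P x + Q (x + e1), P x + Q (x + e2);
   as there are 3n^2 of them, it suffices that they cover [0, 3n^2).
   If 3 | n, Q(a,b) = a + 2b mod 3 takes three distinct values on each triple
   of points, and P = 3 * (index of x) makes every triple a block
   {3w, 3w+1, 3w+2}.  If 3 does not divide n, Q(a,b) = a - b mod n turns the
   triple of x with Q x = s into P x + {s-1, s, s+1} (mod n): an interval when
   0 < s < n-1, while the two wrapped triples s = 0 and s = n-1 fit together
   into two blocks.  The case n = 2 is a small table. *)

Lemma perm_iota_of_cover (s : seq nat) N :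
  size s = N -> (forall v, v < N -> v \in s) -> perm_eq s (iota 0 N).
Proof.
move=> size_s cover; have uniq_iota := iota_uniq 0 N.
have sub : {subset iota 0 N <= s} by move=> v; rewrite mem_iota => /cover.
have [_ eq_s] := uniq_min_size uniq_iota sub (eq_leq (etrans size_s (esym (size_iota 0 N)))).
by apply: uniq_perm => //; rewrite -(eq_uniq _ eq_s) ?size_iota.
Qed.

Section LineSums.
Variables (n : nat) (C : 'I_n -> 'I_n -> 'I_n -> nat).

Lemma size_line_sums : size (line_sums C) = 3 * n ^ 2.
Proof.
rewrite !size_cat !size_map -!enumT -!cardT card_prod card_ord; lia.
Qed.

Lemma mem_line_sums1 j k : \sum_(i < n) C i j k \in line_sums C.
Proof.
by rewrite !mem_cat; apply/or3P; apply: Or31; apply/mapP; exists (j, k); rewrite ?mem_enum.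
Qed.

Lemma mem_line_sums2 i k : \sum_(j < n) C i j k \in line_sums C.
Proof.
by rewrite !mem_cat; apply/or3P; apply: Or32; apply/mapP; exists (i, k); rewrite ?mem_enum.
Qed.

Lemma mem_line_sums3 i j : \sum_(k < n) C i j k \in line_sums C.
Proof.
by rewrite !mem_cat; apply/or3P; apply: Or33; apply/mapP; exists (i, j); rewrite ?mem_enum.
Qed.

Lemma sarvate_beam_cube_of_cover :
  (forall v, v < 3 * n ^ 2 -> v \in line_sums C) -> sarvate_beam_cube C.
Proof. by move=> cover; apply: perm_iota_of_cover; rewrite ?size_line_sums. Qed.

End LineSums.

Lemma sum_mod_pick n (F : nat -> nat) c r a : a < n -> (a + c) %% n = r ->
  \sum_(i < n) (if (i + c) %% n == r then F i else 0) = F a.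
Proof.
move=> lt_an ac_r; rewrite -big_mkcond (big_pred1 (Ordinal lt_an)) // => i /=.
apply/eqP/eqP => [ic_r | ->]; last by [].
apply: val_inj => /=; apply/eqP.
by rewrite -(modn_small lt_an) -(modn_small (ltn_ord i)) -(eqn_modDr c) ac_r ic_r.
Qed.

Section TwoLayerCube.
Variables (n : nat) (P Q : nat -> nat -> nat).
Hypothesis n_gt1 : 1 < n.

Definition two_layer_cube (i j k : 'I_n) : nat :=
  (if (i + j + k) %% n == 0 then P i j else 0) +
  (if (i + j + k) %% n == 1 then Q i j else 0).

Definition triple_sums a b : seq nat :=
  [:: P a b + Q a b; P a b + Q (a.+1 %% n) b; P a b + Q a (b.+1 %% n)].

Lemma sum_two_layers (F G : nat -> nat) c a : a < n -> (a + c) %% n = 0 ->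
  \sum_(i < n) ((if (i + c) %% n == 0 then F i else 0) +
                (if (i + c) %% n == 1 then G i else 0)) = F a + G (a.+1 %% n).
Proof.
move=> lt_an ac0; have n_gt0 := ltnW n_gt1.
rewrite big_split /= (sum_mod_pick _ lt_an ac0); congr (_ + _).
apply: sum_mod_pick; first by rewrite ltn_pmod.
by rewrite modnDml addSn -addn1 -modnDml ac0 modn_small.
Qed.

Lemma triple_sums_sub_line_sums a b : a < n -> b < n ->
  {subset triple_sums a b <= line_sums two_layer_cube}.
Proof.
move=> lt_an lt_bn; have n_gt0 := ltnW n_gt1.
pose k := Ordinal (ltn_pmod (n - (a + b) %% n) n_gt0).
have abk0 : (a + b + k) %% n = 0.
  by rewrite /= modnDmr -modnDml subnKC ?modnn // ltnW // ltn_pmod.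
move=> v; rewrite !inE => /or3P[] /eqP ->.
- have := mem_line_sums3 two_layer_cube (Ordinal lt_an) (Ordinal lt_bn).
  under eq_bigr do rewrite /two_layer_cube /= (addnC (a + b)).
  by rewrite (sum_two_layers (fun=> P a b) (fun=> Q a b) (ltn_ord k)) // addnC.
- have := mem_line_sums1 two_layer_cube (Ordinal lt_bn) k.
  under eq_bigr do rewrite /two_layer_cube -addnA.
  by rewrite (sum_two_layers (P^~ b) (Q^~ b) lt_an) // addnA.
- have := mem_line_sums2 two_layer_cube (Ordinal lt_an) k.
  under eq_bigr do rewrite /two_layer_cube (addnC a) -addnA.
  by rewrite (sum_two_layers (P a) (Q a) lt_bn) // addnCA addnA.
Qed.

Definition triple_cover := forall v, v < 3 * n ^ 2 ->
  exists a b, [/\ a < n, b < n & v \in triple_sums a b].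

Lemma sarvate_beam_two_layer_cube : triple_cover -> sarvate_beam_cube two_layer_cube.
Proof.
move=> cover; apply: sarvate_beam_cube_of_cover => v /cover[a [b [lt_an lt_bn]]].
exact: triple_sums_sub_line_sums.
Qed.

End TwoLayerCube.

Lemma triple_cover2 :
  triple_cover 2 (fun a b => 3 * a + 5 * b) (fun a b => a + 2 * b).
Proof.
have cover : all (fun v => has (fun ab => v \in
    triple_sums 2 (fun a b => 3 * a + 5 * b) (fun a b => a + 2 * b) ab.1 ab.2)
    [:: (0, 0); (1, 0); (0, 1); (1, 1)]) (iota 0 12) by [].
move=> v lt_v12; have /allP/(_ v) := cover; rewrite mem_iota lt_v12 => /(_ isT).
case/hasP=> -[a b] ab_small v_ab.
suff [lt_a2 lt_b2] : a < 2 /\ b < 2 by exists a, b.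
by move: ab_small; rewrite !inE => /or4P[] /eqP[-> ->].
Qed.

Lemma triple_cover_dvd3 n : 1 < n -> 3 %| n ->
  triple_cover n (fun a b => 3 * (a * n + b)) (fun a b => (a + 2 * b) %% 3).
Proof.
move=> n_gt1 dvd3n v lt_v; have n_gt0 := ltnW n_gt1.
set w := v %/ 3; set a := w %/ n; set b := w %% n.
have lt_an : a < n by rewrite ltn_divLR // -(ltn_pmul2l (isT : 0 < 3)); lia.
have lt_bn : b < n by rewrite ltn_pmod.
exists a, b; split => //.
have mod3n x : x %% n %% 3 = x %% 3 := modn_dvdm x dvd3n.
have Q_succl : (a.+1 %% n + 2 * b) %% 3 = (a + 2 * b).+1 %% 3.
  by rewrite -modnDml mod3n modnDml addSn.
have Q_succr : (a + 2 * (b.+1 %% n)) %% 3 = (a + 2 * b).+2 %% 3.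
  by rewrite -modnDmr -modnMmr mod3n modnMmr modnDmr; congr (_ %% 3); lia.
have -> : v = 3 * (a * n + b) + v %% 3 by rewrite -divn_eq mulnC -divn_eq.
by rewrite /triple_sums Q_succl Q_succr !inE; lia.
Qed.

Definition diff_mod n a b := (a + n - b) %% n.

Lemma diff_mod_succl n a b : b < n ->
  diff_mod n (a.+1 %% n) b = (diff_mod n a b).+1 %% n.
Proof.
move=> lt_bn; rewrite /diff_mod -!addnBA 1?ltnW //.
by rewrite modnDml -[(_ %% n).+1]addn1 modnDml addn1 addSn.
Qed.

Lemma diff_mod_succr n a b : b < n ->
  diff_mod n a (b.+1 %% n) = (diff_mod n a b + n.-1) %% n.
Proof.
move=> lt_bn; rewrite /diff_mod modnDml.
have [lt_b1n | le_nb1] := ltnP b.+1 n.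
  rewrite (modn_small lt_b1n) -(modnDr (a + n - b.+1) n).
  by rewrite (_ : a + n - b.+1 + n = a + n - b + n.-1) //; lia.
rewrite (_ : b.+1 = n) ?modnn ?subn0; last by lia.
by rewrite (_ : a + n - b + n.-1 = a + n) //; lia.
Qed.

Lemma diff_modK n a s : s < n -> diff_mod n a (diff_mod n a s) = s.
Proof.
move=> lt_sn; rewrite {1}/diff_mod -[RHS](modn_small lt_sn); apply/eqP.
rewrite -(eqn_modDr (diff_mod n a s)) subnK; last first.
  exact: leq_trans (leq_mod _ _) (leq_subr _ _).
by rewrite modnDmr subnKC //; lia.
Qed.

Section Diagonal.
Variables (n : nat) (B : nat -> nat -> nat).
Hypothesis n_gt1 : 1 < n.

Definition diag_sums a s : seq nat :=
  [:: B a s + s; B a s + s.+1 %% n; B a s + (s + n.-1) %% n].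

Lemma triple_cover_diag :
  (forall v, v < 3 * n ^ 2 -> exists a s, [/\ a < n, s < n & v \in diag_sums a s]) ->
  triple_cover n (fun a b => B a (diff_mod n a b)) (diff_mod n).
Proof.
move=> cover v /cover[a [s [lt_an lt_sn v_as]]].
have lt_bn : diff_mod n a s < n by rewrite ltn_pmod // ltnW.
exists a, (diff_mod n a s); split => //.
by rewrite /triple_sums diff_mod_succl // diff_mod_succr // diff_modK.
Qed.

Lemma diag_sums_mid a s : 0 < s -> s < n.-1 ->
  diag_sums a s = [:: B a s + s; B a s + s.+1; B a s + s.-1].
Proof.
move=> s_gt0 lt_sn; rewrite /diag_sums modn_small; last by lia.
by rewrite (_ : s + n.-1 = s.-1 + n) ?modnDr ?modn_small //; lia.
Qed.

Lemma diag_sums_first a : diag_sums a 0 = [:: B a 0; B a 0 + 1; B a 0 + n.-1].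
Proof. by rewrite /diag_sums !modn_small ?addn0 //; lia. Qed.

Lemma diag_sums_last a :
  diag_sums a n.-1 = [:: B a n.-1 + n.-1; B a n.-1; B a n.-1 + n.-2].
Proof.
rewrite /diag_sums prednK ?modnn ?addn0; last by lia.
by rewrite (_ : n.-1 + n.-1 = n.-2 + n) ?modnDr ?modn_small //; lia.
Qed.

End Diagonal.

Section NotDvd3.
Variable n : nat.
Local Notation m := (n.-1 %/ 3).
Local Notation e := (n.-1 %% 3).

(* For each a, the blocks a(m+1) and a(m+1) + m are filled by the two wrapped
   triples s = 0 and s = n-1 (the offset e = (n-1) mod 3 is 0 or 1 and absorbs
   n mod 3); the triple of any other s is the block mid_block a s, which
   enumerates the blocks strictly between them and then all blocks from
   n(m+1) on. *)
Definition mid_block a s :=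
  if s < m then a * m.+1 + s else n * m.+1 + n * (s - m) + a.

Definition base_ndvd3 a s :=
  if s == 0 then 3 * (a * m.+1) + e
  else if s == n.-1 then 3 * (a * m.+1) + 2 - 2 * e
  else 3 * mid_block a s + 1 - s.

Hypotheses (n_gt3 : 3 < n) (ndvd3 : ~~ (3 %| n)).
Let n_gt1 : 1 < n := ltn_trans (isT : 1 < 3) n_gt3.
Let n_gt0 : 0 < n := ltnW n_gt1.

Lemma mem_diag_sums_mid a s r : 0 < s -> s < n.-1 -> r < 3 ->
  3 * mid_block a s + r \in diag_sums n base_ndvd3 a s.
Proof.
move=> s_gt0 lt_sn lt_r3; rewrite diag_sums_mid // /base_ndvd3.
have : s <= mid_block a s by rewrite /mid_block; case: ifP; nia.
by rewrite !ifN_eq ?inE; lia.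
Qed.

Lemma mem_diag_sums_corner a u r : (u == 0) || (u == m) -> r < 3 ->
  3 * (a * m.+1 + u) + r \in diag_sums n base_ndvd3 a 0 ++ diag_sums n base_ndvd3 a n.-1.
Proof.
move=> u_corner lt_r3.
rewrite mem_cat (diag_sums_first _ n_gt1) (diag_sums_last _ n_gt1) /base_ndvd3 eqxx.
by rewrite ifN_eq ?eqxx ?inE; lia.
Qed.

Lemma block_cases w : w < n * n ->
  (exists a u, [/\ a < n, (u == 0) || (u == m) & w = a * m.+1 + u]) \/
  (exists a s, [/\ a < n, 0 < s < n.-1 & w = mid_block a s]).
Proof.
move=> lt_w_nn.
have [lt_w_low | le_low_w] := ltnP w (n * m.+1).
  have lt_a : w %/ m.+1 < n by rewrite ltn_divLR.
  have lt_u : w %% m.+1 < m.+1 by rewrite ltn_pmod.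
  have w_eq : w = w %/ m.+1 * m.+1 + w %% m.+1 := divn_eq w m.+1.
  have [u_corner | u_mid] := boolP ((w %% m.+1 == 0) || (w %% m.+1 == m)).
    by left; exists (w %/ m.+1), (w %% m.+1).
  right; exists (w %/ m.+1), (w %% m.+1); split => //; first lia.
  by rewrite /mid_block ifT; lia.
have [t w_eq] : exists t, w = n * m.+1 + t by exists (w - n * m.+1); lia.
have lt_tn : t %/ n < n - m.+1 by rewrite ltn_divLR // mulnBl [m.+1 * n]mulnC; lia.
right; exists (t %% n), (m + t %/ n); split; first exact: ltn_pmod.
  by move: (t %/ n) lt_tn => q; lia.
by rewrite w_eq /mid_block ltnNge leq_addr addKn /= [n * (t %/ n)]mulnC -addnA -divn_eq.
Qed.

Lemma diag_cover_ndvd3 v : v < 3 * n ^ 2 ->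
  exists a s, [/\ a < n, s < n & v \in diag_sums n base_ndvd3 a s].
Proof.
move=> lt_v; have lt_r3 : v %% 3 < 3 by rewrite ltn_pmod.
have lt_w : v %/ 3 < n * n by rewrite ltn_divLR // mulnC mulnn.
rewrite (divn_eq v 3) mulnC.
case: (block_cases lt_w) => [[a [u [lt_an u_corner ->]]] | [a [s [lt_an s_mid ->]]]].
- have /[!mem_cat]/orP[v_first | v_last] := mem_diag_sums_corner a u_corner lt_r3.
    by exists a, 0.
  by exists a, n.-1; split => //; lia.
- exists a, s; split => //; first lia.
  by case/andP: s_mid => s_gt0 lt_sn; apply: mem_diag_sums_mid.
Qed.

End NotDvd3.

Theorem theorem4p1 (n : nat) (hn : 2 <= n) :
  exists C : 'I_n -> 'I_n -> 'I_n -> nat, sarvate_beam_cube C.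
Proof.
have [-> | n_ne2] := eqVneq n 2.
  by eexists; apply: sarvate_beam_two_layer_cube triple_cover2.
have [dvd3n | ndvd3n] := boolP (3 %| n).
  by eexists; apply: sarvate_beam_two_layer_cube (triple_cover_dvd3 hn dvd3n).
have n_gt3 : 3 < n by move: ndvd3n n_ne2; case: n hn => [|[|[|[|n]]]].
eexists; apply: sarvate_beam_two_layer_cube => //.
exact/triple_cover_diag/(diag_cover_ndvd3 n_gt3 ndvd3n).
Qed.
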